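(* $\mathcal{H}_{R_0,r}(q)$ is isomorphic as an $R_0$-algebra to the $\mathbb{Z}_2$-crossed product $\mathcal{H}^1_{R_0,r}(q)^{\psi_0}_{\alpha_0}[\mathbb{Z}_2]$; an isomorphism is given by $a_1u_1+a_2u_{-1}\mapsto a_1+a_2T'_1$ ($a_1,a_2\in\mathcal{H}^1_{R_0,r}(q)$). In particular $\mathcal{H}_{R_0,r}(q)=\mathcal{H}^1_{R_0,r}(q)\oplus\mathcal{H}^1_{R_0,r}(q)T'_1$.
   Context: $R_0$ is a commutative domain with invertible elements $q$, $2$, $q+q^{-1}$; $r\ge2$; $\mathcal{H}_{R_0,r}(q)$ is the type $A$ Iwahori–Hecke algebra with generators $T_1,\dots,T_{r-1}$, relations $T_i^2=(q-q^{-1})T_i+1$, $T_iT_{i+1}T_i=T_{i+1}T_iT_{i+1}$, $T_iT_j=T_jT_i$ ($|i-j|>1$); $T'_i=\frac{2T_i-(q-q^{-1})}{q+q^{-1}}$; the Goldman involution is the algebra automorphism with $\hat T_i=(q-q^{-1})-T_i$, and $\mathcal{H}^1_{R_0,r}(q)=\{X:\hat X=X\}$. $\mathbb{Z}_2=\{1,-1\}$ multiplicatively. $\psi_0(1)=\mathrm{id}$, $\psi_0(-1)(T)=T'_1TT'_1$, $\alpha_0\equiv1$. For a crossed system $(A,G,\psi,\alpha)$ (maps $\psi:G\to\operatorname{Aut}(A)$, ${}^\sigma a:=\psi(\sigma)(a)$, and $\alpha:G\times G\to A^\times$ satisfying ${}^\sigma({}^\tau a)=\alpha(\sigma,\tau){}^{\sigma\tau}a\,\alpha(\sigma,\tau)^{-1}$,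 the cocycle identity ${}^{\sigma_1}\alpha(\sigma_2,\sigma_3)\alpha(\sigma_1,\sigma_2\sigma_3)=\alpha(\sigma_1,\sigma_2)\alpha(\sigma_1\sigma_2,\sigma_3)$, and $\alpha(\sigma,1)=\alpha(1,\sigma)=1$), the crossed product $A^\psi_\alpha[G]$ is the free left $A$-module with basis $\{u_\sigma:\sigma\in G\}$ and multiplication $(a_1u_\sigma)(a_2u_\tau)=a_1\,{}^\sigma a_2\,\alpha(\sigma,\tau)\,u_{\sigma\tau}$. *)

From HB Require Import structures.
From mathcomp Require Import all_boot all_order all_algebra.
Set Implicit Arguments. Unset Strict Implicit. Unset Printing Implicit Defensive.
Import GRing.Theory.
Local Open Scope ring_scope.

Definition is_alg_hom (R : comNzRingType) (A B : algType R) (f : A -> B) : Prop :=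
  [/\ forall x y, f (x + y) = f x + f y,
      forall x y, f (x * y) = f x * f y,
      f 1 = 1 &
      forall (k : R) x, f (k *: x) = k *: f x].

(* Hecke relations for generators t 1, ..., t (r-1) (indices outside 1..r-1 unused). *)
Definition hecke_rel (R : idomainType) (q : R) (r : nat) (B : algType R)
    (t : nat -> B) : Prop :=
  [/\ forall i, (0 < i < r)%N ->
        t i ^+ 2 = (q - q^-1) *: t i + 1,
      forall i, (0 < i)%N -> (i.+1 < r)%N ->
        t i * t i.+1 * t i = t i.+1 * t i * t i.+1 &
      forall i j, (0 < i < r)%N -> (0 < j < r)%N -> (j.+1 < i \/ i.+1 < j)%N ->
        t i * t j = t j * t i].

(* (A, T) is the Iwahori-Hecke algebra H_{R0,r}(q): the R0-algebra presented by
   generators T_1..T_{r-1} and the Hecke relations (universal property). *)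
Definition is_hecke_algebra (R : idomainType) (q : R) (r : nat) (A : algType R)
    (T : nat -> A) : Prop :=
  hecke_rel q r T /\
  forall (B : algType R) (t : nat -> B), hecke_rel q r t ->
    exists! f : A -> B, is_alg_hom f /\ forall i, (0 < i < r)%N -> f (T i) = t i.

Definition Tprime (R : idomainType) (q : R) (A : algType R) (T : nat -> A) (i : nat) : A :=
  (q + q^-1)^-1 *: (2%:R *: T i - (q - q^-1)%:A).

Definition is_goldman (R : idomainType) (q : R) (r : nat) (A : algType R)
    (T : nat -> A) (g : A -> A) : Prop :=
  is_alg_hom g /\ forall i, (0 < i < r)%N -> g (T i) = (q - q^-1)%:A - T i.

Definition H1 (R : idomainType) (q : R) (r : nat) (A : algType R) (T : nat -> A)
    (X : A) : Prop :=
  forall g, is_goldman q r T g -> g X = X.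

Inductive Z2 := Z2one | Z2neg.
Definition Z2mul (s t : Z2) : Z2 :=
  match s, t with
  | Z2one, u => u
  | Z2neg, Z2one => Z2neg
  | Z2neg, Z2neg => Z2one
  end.

(* Crossed system (S, Z2, psi, alpha), where the algebra S is given as a
   subset S of an ambient ring A (with the induced operations). *)
Definition is_crossed_system (A : nzRingType) (S : A -> Prop)
    (psi : Z2 -> A -> A) (alpha : Z2 -> Z2 -> A) : Prop :=
  [/\
      forall s, (forall a, S a -> S (psi s a)) /\
        (forall a b, S a -> S b -> psi s (a + b) = psi s a + psi s b) /\
        (forall a b, S a -> S b -> psi s (a * b) = psi s a * psi s b) /\
        psi s 1 = 1 /\
        (forall b, S b -> exists! a, S a /\ psi s a = b),
      forall s t, S (alpha s t) /\
        exists beta, S beta /\ alpha s t * beta = 1 /\ beta * alpha s t = 1,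
      forall s t a, S a -> forall beta, S beta -> alpha s t * beta = 1 ->
        beta * alpha s t = 1 ->
        psi s (psi t a) = alpha s t * psi (Z2mul s t) a * beta,
      forall s1 s2 s3,
        psi s1 (alpha s2 s3) * alpha s1 (Z2mul s2 s3) =
        alpha s1 s2 * alpha (Z2mul s1 s2) s3 &
      forall s, alpha s Z2one = 1 /\ alpha Z2one s = 1].

(* Elements of the crossed product S^psi_alpha[Z2]: x = x(1) u_1 + x(-1) u_{-1}.
   Multiplication (a1 u_s)(a2 u_t) = a1 psi_s(a2) alpha(s,t) u_{st}, i.e.
   (x y)(rho) = sum_{s t = rho} x(s) psi_s(y(t)) alpha(s,t); in Z2, t = s rho. *)
Definition cp_mul (A : nzRingType) (psi : Z2 -> A -> A) (alpha : Z2 -> Z2 -> A)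
    (x y : Z2 -> A) : Z2 -> A :=
  fun rho =>
    x Z2one * psi Z2one (y (Z2mul Z2one rho)) * alpha Z2one (Z2mul Z2one rho) +
    x Z2neg * psi Z2neg (y (Z2mul Z2neg rho)) * alpha Z2neg (Z2mul Z2neg rho).

Definition cp_add (A : nzRingType) (x y : Z2 -> A) : Z2 -> A := fun s => x s + y s.

Definition cp_one {A : nzRingType} : Z2 -> A :=
  fun s => if s is Z2one then 1 else 0.

Definition cp_scale (R : comNzRingType) (A : algType R) (k : R) (x : Z2 -> A) : Z2 -> A :=
  fun s => k *: x s.

Definition psi0 (R : idomainType) (q : R) (A : algType R) (T : nat -> A) : Z2 -> A -> A :=
  fun s a => if s is Z2one then a else Tprime q T 1 * a * Tprime q T 1.
Definition alpha0 {A : nzRingType} : Z2 -> Z2 -> A := fun _ _ => 1.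

Definition Phi (R : idomainType) (q : R) (A : algType R) (T : nat -> A) (x : Z2 -> A) : A :=
  x Z2one + x Z2neg * Tprime q T 1.

(* The Goldman involution exists because [(q - q^-1) - T_i = - T_i^-1] satisfies
   the Hecke relations again; it is an involution and sends [T'_1] to [- T'_1].
   Moreover [T'_1 ^+ 2 = 1], since [(q - q^-1)^2 + 4 = (q + q^-1)^2].  So
   [H = H^1 (+) H^1 T'_1] is the eigenspace decomposition of the Goldman
   involution (2 is invertible), conjugation by [T'_1] preserves [H^1], and
   [(a1 + a2 T'_1) (b1 + b2 T'_1) = (a1 b1 + a2 T'_1 b2 T'_1) + (a1 b2 + a2 T'_1 b1 T'_1) T'_1]
   is the crossed-product multiplication. *)

From mathcomp Require Import all_boot all_order all_algebra.
From mathcomp Require Import ring.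
From Stdlib Require Import FunctionalExtensionality.
Import GRing.Theory.
Set Implicit Arguments. Unset Strict Implicit. Unset Printing Implicit Defensive.
Local Open Scope ring_scope.

Section QuadraticElement.
Variables (R : comNzRingType) (A : algType R) (d : R) (t : A).

Lemma sqr_algB (a : R) (u : A) :
  (a%:A - u) ^+ 2 = (a ^+ 2)%:A - (a *+ 2) *: u + u ^+ 2.
Proof.
rewrite expr2 mulrBl !mulrBr !mulr_algl mulr_algr scalerA -!expr2 -scalerMnl mulr2n.
by rewrite opprB opprD !addrA addrAC.
Qed.

Hypothesis t_sqr : t ^+ 2 = d *: t + 1.

Lemma quadratic_inv : t * (t - d%:A) = 1 /\ (t - d%:A) * t = 1.
Proof.
by split; rewrite ?mulrBr ?mulrBl ?mulr_algr ?mulr_algl -expr2 t_sqr addrAC subrr add0r.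
Qed.

Lemma quadratic_reflect : (d%:A - t) ^+ 2 = d *: (d%:A - t) + 1.
Proof.
rewrite sqr_algB t_sqr scalerBr scalerA -expr2 mulr2n scalerDl opprD !addrA.
by rewrite subrK.
Qed.

Lemma quadratic_shift_sqr : (2%:R *: t - d%:A) ^+ 2 = (d ^+ 2 + 4%:R)%:A.
Proof.
rewrite -opprB sqrrN sqr_algB exprZn t_sqr scalerDr !scalerA.
have -> : 2%:R ^+ 2 * d = d *+ 2 * 2%:R by ring.
by rewrite addrA subrK -scalerDl; congr (_ *: _); ring.
Qed.
End QuadraticElement.

Lemma braid_inverse (A : pzRingType) (a a' b b' : A) :
  a * a' = 1 -> a' * a = 1 -> b * b' = 1 -> b' * b = 1 ->
  a * b * a = b * a * b -> a' * b' * a' = b' * a' * b'.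
Proof.
move=> aa' a'a bb' b'b braid.
have inv_l : (a' * b' * a') * (a * b * a) = 1.
  by rewrite !mulrA -(mulrA (a' * b') a' a) a'a mulr1 -(mulrA a' b' b) b'b mulr1 a'a.
have inv_r : (b * a * b) * (b' * a' * b') = 1.
  by rewrite !mulrA -(mulrA (b * a) b b') bb' mulr1 -(mulrA b a a') aa' mulr1 bb'.
by rewrite -[LHS]mulr1 -inv_r -braid mulrA inv_l mul1r.
Qed.

Lemma comm_inverse (A : pzRingType) (a a' b b' : A) :
  a * a' = 1 -> a' * a = 1 -> b * b' = 1 -> b' * b = 1 ->
  GRing.comm a b -> GRing.comm a' b'.
Proof.
move=> aa' a'a bb' b'b ab.
have inv_l : (b' * a') * (a * b) = 1 by rewrite mulrA -(mulrA b') a'a mulr1 b'b.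
have inv_r : (b * a) * (a' * b') = 1 by rewrite mulrA -(mulrA b) aa' mulr1 bb'.
by rewrite /GRing.comm -[LHS]mul1r -inv_l ab -mulrA inv_r mulr1.
Qed.

Section AlgHom.
Variables (R : comNzRingType) (A B : algType R) (f : A -> B).
Hypothesis f_hom : is_alg_hom f.

Lemma alg_homN x : f (- x) = - f x.
Proof. by case: f_hom => _ _ _ fZ; rewrite -scaleN1r fZ scaleN1r. Qed.

Lemma alg_homB x y : f (x - y) = f x - f y.
Proof. by case: f_hom => fD _ _ _; rewrite fD alg_homN. Qed.

Lemma alg_hom_scalar k : f k%:A = k%:A.
Proof. by case: f_hom => _ _ f1 fZ; rewrite fZ f1. Qed.

End AlgHom.

Definition z2_conj (A : nzRingType) (t : A) : Z2 -> A -> A :=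
  fun s a => if s is Z2one then a else t * a * t.

Definition z2_sum (A : nzRingType) (t : A) (x : Z2 -> A) : A :=
  x Z2one + x Z2neg * t.

Section Z2Grading.
Variables (R : comNzRingType) (A : algType R) (t : A).
Hypothesis t_invol : t * t = 1.

Lemma conj_involK a : t * (t * a * t) * t = a.
Proof. by rewrite !mulrA t_invol mul1r -mulrA t_invol mulr1. Qed.

Lemma z2_sum_mul x y :
  z2_sum t (cp_mul (z2_conj t) alpha0 x y) = z2_sum t x * z2_sum t y.
Proof.
rewrite /z2_sum /cp_mul /alpha0 /= !mulr1 !mulrDl !mulrDr !mulrA.
rewrite -(mulrA (x Z2neg * t * y Z2one) t t) t_invol mulr1.
by rewrite addrACA; congr (_ + _); exact: addrC.
Qed.

Variables (g : A -> A) (S : A -> Prop).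
Hypotheses (g_hom : is_alg_hom g) (S_fixed : forall a, S a <-> g a = a).
Hypothesis g_t : g t = - t.

Lemma conj_fixed a : S a -> S (t * a * t).
Proof.
case: g_hom => _ gM _ _ /S_fixed ga; apply/S_fixed.
by rewrite !gM g_t ga mulrN !mulNr opprK.
Qed.

Lemma crossed_system_z2_conj : is_crossed_system S (z2_conj t) alpha0.
Proof.
have S1 : S 1 by apply/S_fixed; case: g_hom.
split.
- case; do 4?split => //=.
  + by move=> b Sb; exists b; split => // a [].
  + exact: conj_fixed.
  + by move=> a b _ _; rewrite mulrDr mulrDl.
  + by move=> a b _ _; rewrite !mulrA -(mulrA (t * a) t t) t_invol mulr1.
  + by rewrite mulr1.
  + move=> b Sb; exists (t * b * t); split.
      by split; [exact: conj_fixed | exact: conj_involK].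
    by move=> a [_ <-]; rewrite conj_involK.
- by move=> s u; split; last exists 1; rewrite /alpha0 ?mulr1.
- move=> s u a _ beta _; rewrite /alpha0 mul1r => -> _; rewrite mul1r mulr1.
  by case: s; case: u => //=; rewrite conj_involK.
- by move=> [] s2 s3; rewrite /alpha0 /= ?mulr1 ?t_invol.
- by [].
Qed.

End Z2Grading.

Section Z2Decomposition.
Variables (R : comUnitRingType) (A : algType R) (t : A) (g : A -> A) (S : A -> Prop).
Hypotheses (t_invol : t * t = 1) (g_hom : is_alg_hom g) (gK : involutive g).
Hypotheses (S_fixed : forall a, S a <-> g a = a) (g_t : g t = - t).
Hypothesis two_unit : (2%:R : R) \is a GRing.unit.

Lemma halfD (a : A) : (2%:R : R)^-1 *: (a + a) = a.
Proof. by rewrite -mulr2n -scaler_nat scalerA mulVr // scale1r. Qed.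

(* The witness is [X = 1/2 (X + g X) + (1/2 (X - g X) t) t]. *)
Lemma z2_sum_bij X : exists! x, (forall s, S (x s)) /\ z2_sum t x = X.
Proof.
case: g_hom => gD gM _ gZ.
pose x s := if s is Z2one then (2%:R : R)^-1 *: (X + g X)
            else (2%:R : R)^-1 *: (X - g X) * t.
exists x; split.
  split.
    case; apply/S_fixed => /=; first by rewrite gZ gD gK addrC.
    by rewrite gM gZ (alg_homB g_hom) gK g_t mulrN -mulNr -scalerN opprB.
  by rewrite /z2_sum /= -mulrA t_invol mulr1 -scalerDr addrACA subrr addr0 halfD.
move=> y [Sy yX]; apply: functional_extensionality => s.
have /S_fixed y1 := Sy Z2one; have /S_fixed yn := Sy Z2neg.
rewrite /x -yX /z2_sum gD gM y1 yn g_t mulrN.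
case: s; first by rewrite addrACA subrr addr0 halfD.
by rewrite opprD opprK addrACA subrr add0r halfD -mulrA t_invol mulr1.
Qed.

End Z2Decomposition.

Section Goldman.
Variables (R : idomainType) (q : R) (r : nat) (A : algType R) (T : nat -> A).
Hypothesis hecke : is_hecke_algebra q r T.

Lemma hecke_alg_hom_eq (B : algType R) (t : nat -> B) (f f' : A -> B) :
  hecke_rel q r t -> is_alg_hom f -> is_alg_hom f' ->
  (forall i, (0 < i < r)%N -> f (T i) = t i) ->
  (forall i, (0 < i < r)%N -> f' (T i) = t i) -> f = f'.
Proof.
case: hecke => _ univ ht f_hom f'_hom fT f'T.
have [h [_ h_unique]] := univ B t ht.
by rewrite -(h_unique f) ?(h_unique f').
Qed.

(* [(q - q^-1) - T_i = - T_i^-1], and inverting the generators preserves the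
   braid and commutation relations. *)
Definition goldman_gen i := (q - q^-1)%:A - T i.

Lemma hecke_rel_goldman_gen : hecke_rel q r goldman_gen.
Proof.
case: hecke => -[T_sqr T_braid T_comm] _.
have T_inv i : (0 < i < r)%N ->
    T i * (T i - (q - q^-1)%:A) = 1 /\ (T i - (q - q^-1)%:A) * T i = 1.
  by move/T_sqr; exact: quadratic_inv.
rewrite /goldman_gen; split.
- by move=> i /T_sqr; exact: quadratic_reflect.
- move=> i i_gt0 i_lt.
  have hi : (0 < i < r)%N by rewrite i_gt0 ltnW.
  have [Ti1 Ti2] := T_inv i hi.
  have [Tj1 Tj2] := T_inv i.+1 i_lt.
  rewrite -!(opprB (T _)) !mulrNN !mulrN; congr (- _).
  exact: braid_inverse Ti1 Ti2 Tj1 Tj2 (T_braid i i_gt0 i_lt).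
- move=> i j hi hj hij.
  have [Ti1 Ti2] := T_inv i hi; have [Tj1 Tj2] := T_inv j hj.
  rewrite -!(opprB (T _)) !mulrNN.
  exact: comm_inverse Ti1 Ti2 Tj1 Tj2 (T_comm i j hi hj hij).
Qed.

Lemma goldman_exists : exists g, is_goldman q r T g.
Proof.
case: hecke => _ univ; have [g [[g_hom gT] _]] := univ A _ hecke_rel_goldman_gen.
by exists g.
Qed.

Lemma goldman_unique g g' : is_goldman q r T g -> is_goldman q r T g' -> g = g'.
Proof. by case=> ? ? [? ?]; exact: hecke_alg_hom_eq hecke_rel_goldman_gen _ _ _ _. Qed.

Lemma H1_goldman g X : is_goldman q r T g -> H1 q r T X <-> g X = X.
Proof.
move=> gG; split; first exact.
by move=> gX g' /(goldman_unique gG) <-.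
Qed.

Lemma goldman_involutive g : is_goldman q r T g -> involutive g.
Proof.
case=> g_hom gT.
have gg_hom : is_alg_hom (g \o g).
  case: g_hom => gD gM g1 gZ; split=> /= [x y|x y||k x]; by rewrite ?gD ?gM ?g1 ?gZ.
have id_hom : is_alg_hom (@id A) by [].
have gg_id : g \o g = id.
  apply: hecke_alg_hom_eq (proj1 hecke) gg_hom id_hom _ _ => // i hi /=.
  by rewrite gT // (alg_homB g_hom) (alg_hom_scalar g_hom) gT // subKr.
by move=> x; rewrite -[RHS]/(id x) -gg_id.
Qed.

Lemma goldman_Tprime g : (1 < r)%N -> is_goldman q r T g ->
  g (Tprime q T 1) = - Tprime q T 1.
Proof.
move=> r_gt1 [g_hom gT]; have [_ _ _ gZ] := g_hom.
rewrite /Tprime gZ (alg_homB g_hom) gZ (alg_hom_scalar g_hom) gT // -[RHS]scalerN.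
rewrite opprB; congr (_ *: _).
by rewrite scalerBr addrAC scaler_nat mulr2n scalerDl scale1r addrK.
Qed.

End Goldman.

Lemma Tprime_sqr (R : idomainType) (q : R) (A : algType R) (T : nat -> A) :
  q \is a GRing.unit -> q + q^-1 \is a GRing.unit ->
  T 1 ^+ 2 = (q - q^-1) *: T 1 + 1 -> Tprime q T 1 * Tprime q T 1 = 1.
Proof.
move=> q_unit qq_unit T_sqr.
rewrite -expr2 /Tprime exprZn quadratic_shift_sqr // scalerA.
have -> : (q - q^-1) ^+ 2 + 4%:R = (q + q^-1) ^+ 2 + 4%:R * (1 - q * q^-1) by ring.
by rewrite mulrV // subrr mulr0 addr0 -exprMn mulVr // expr1n scale1r.
Qed.

Theorem theorem3p9 (R0 : idomainType) (q : R0) (r : nat) (A : algType R0)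
    (T : nat -> A) :
  q \is a GRing.unit -> (2%:R : R0) \is a GRing.unit ->
  (q + q^-1) \is a GRing.unit -> (2 <= r)%N ->
  is_hecke_algebra q r T ->
  (* (H^1, Z2, psi0, alpha0) is a crossed system *)
  is_crossed_system (H1 q r T) (psi0 q T) alpha0 /\
  (* Phi : H^1 psi0_alpha0 [Z2] -> H is a bijection, i.e. H = H^1 (+) H^1 T'_1 *)
  (forall X : A, exists! x : Z2 -> A,
      (forall s, H1 q r T (x s)) /\ Phi q T x = X) /\
  (* Phi is an R0-algebra homomorphism *)
  (forall x y : Z2 -> A, (forall s, H1 q r T (x s)) -> (forall s, H1 q r T (y s)) ->
      Phi q T (cp_add x y) = Phi q T x + Phi q T y /\
      Phi q T (cp_mul (psi0 q T) alpha0 x y) = Phi q T x * Phi q T y) /\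
  (forall (k : R0) (x : Z2 -> A), Phi q T (cp_scale k x) = k *: Phi q T x) /\
  Phi q T cp_one = 1.
Proof.
move=> q_unit two_unit qq_unit r_ge2 hecke.
have [g gG] := goldman_exists hecke.
have H1E X : H1 q r T X <-> g X = X := H1_goldman hecke X gG.
have T'_invol : Tprime q T 1 * Tprime q T 1 = 1.
  by apply: Tprime_sqr => //; case: hecke => -[T_sqr _ _] _; exact: T_sqr.
have gT' := goldman_Tprime r_ge2 gG.
split; first exact: (crossed_system_z2_conj T'_invol (proj1 gG) H1E gT').
split; first exact: (z2_sum_bij T'_invol (proj1 gG) (goldman_involutive hecke gG) H1E gT').
split; first by move=> x y _ _; split; [rewrite /Phi mulrDl addrACA | exact: z2_sum_mul].
split; first by move=> k x; rewrite /Phi scalerDr scalerAl.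
by rewrite /Phi mul0r addr0.
Qed.
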